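(* Let $m,g>0$, $k\in\mathbb{N}$, $\gamma\in\mathbb{R}$, and let $(\psi_1,\psi_2)$ be a sufficiently smooth solution, decaying with its derivatives as $|x|\to\infty$, of $$i\partial_t\psi_1=\partial_x\psi_2-g(|\psi_1|^2-|\psi_2|^2)^k\psi_1+m\psi_1+i\gamma\psi_2,\qquad i\partial_t\psi_2=-\partial_x\psi_1+g(|\psi_1|^2-|\psi_2|^2)^k\psi_2-m\psi_2+i\gamma\psi_1.$$ Then the ($\gamma$-independent) energy $$E(t)=\frac12\int_{\mathbb{R}}\Big[\overline{\psi_1}\,\partial_x\psi_2-\overline{\psi_2}\,\partial_x\psi_1+m(|\psi_1|^2-|\psi_2|^2)-\frac{g}{k+1}\big(|\psi_1|^2-|\psi_2|^2\big)^{k+1}\Big]dx$$ is real and conserved: $dE/dt=0$, for every value of $\gamma$.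
   Context: This is the $\mathcal{P}\mathcal{T}$-symmetric 1D Soler model (gain–loss term $i\gamma\sigma_1\psi$ with $\sigma_1$ the first Pauli matrix). *)

From Stdlib Require Import Reals.
Open Scope R_scope.

Definition Cpx : Type := (R * R)%type.
Definition RtoC (r : R) : Cpx := (r, 0).
Definition Ci : Cpx := (0, 1).
Definition Cadd (z w : Cpx) : Cpx := (fst z + fst w, snd z + snd w).
Definition Copp (z : Cpx) : Cpx := (- fst z, - snd z).
Definition Csub (z w : Cpx) : Cpx := Cadd z (Copp w).
Definition Cmul (z w : Cpx) : Cpx :=
  (fst z * fst w - snd z * snd w, fst z * snd w + snd z * fst w).
Definition Cconj (z : Cpx) : Cpx := (fst z, - snd z).
Definition Cnorm2 (z : Cpx) : R := fst z ^ 2 + snd z ^ 2.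

Definition C_deriv (f : R -> Cpx) (x : R) (l : Cpx) : Prop :=
  derivable_pt_lim (fun s => fst (f s)) x (fst l) /\
  derivable_pt_lim (fun s => snd (f s)) x (snd l).

Definition R_improper_integral (f : R -> R) (l : R) : Prop :=
  forall eps, 0 < eps -> exists M, 0 < M /\
    forall a b, a <= - M -> M <= b ->
      exists pr : Riemann_integrable f a b, Rabs (RiemannInt pr - l) < eps.

Definition C_improper_integral (f : R -> Cpx) (l : Cpx) : Prop :=
  R_improper_integral (fun x => fst (f x)) (fst l) /\
  R_improper_integral (fun x => snd (f x)) (snd l).

Definition cont2 (f : R -> R -> R) : Prop :=
  forall t x eps, 0 < eps -> exists delta, 0 < delta /\
    forall t' x', Rabs (t' - t) < delta -> Rabs (x' - x) < delta ->
      Rabs (f t' x' - f t x) < eps.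

Definition Ccont2 (f : R -> R -> Cpx) : Prop :=
  cont2 (fun t x => fst (f t x)) /\ cont2 (fun t x => snd (f t x)).

Definition decays (f : R -> R -> Cpx) : Prop :=
  forall T, exists K, forall t x, Rabs t <= T ->
    Rabs (fst (f t x)) <= K / (1 + x ^ 2) /\ Rabs (snd (f t x)) <= K / (1 + x ^ 2).

(** "Sufficiently smooth, decaying with its derivatives": p has partial derivatives
    pt = d_t p, px = d_x p, and mixed derivative ptx = d_t d_x p = d_x d_t p,
    all jointly continuous and decaying as |x| -> oo. *)
Definition smooth_decaying (p pt px ptx : R -> R -> Cpx) : Prop :=
  (forall t x, C_deriv (fun s => p s x) t (pt t x)) /\
  (forall t x, C_deriv (fun y => p t y) x (px t x)) /\
  (forall t x, C_deriv (fun s => px s x) t (ptx t x)) /\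
  (forall t x, C_deriv (fun y => pt t y) x (ptx t x)) /\
  Ccont2 p /\ Ccont2 pt /\ Ccont2 px /\ Ccont2 ptx /\
  decays p /\ decays pt /\ decays px /\ decays ptx.

Definition rho (z1 z2 : Cpx) : R := Cnorm2 z1 - Cnorm2 z2.

Definition soler_eq1 (m g gamma : R) (k : nat) (z1 z2 z1t z2x : Cpx) : Prop :=
  Cmul Ci z1t =
  Cadd (Cadd (Cadd z2x (Copp (Cmul (RtoC (g * rho z1 z2 ^ k)) z1)))
             (Cmul (RtoC m) z1))
       (Cmul (Cmul Ci (RtoC gamma)) z2).

Definition soler_eq2 (m g gamma : R) (k : nat) (z1 z2 z2t z1x : Cpx) : Prop :=
  Cmul Ci z2t =
  Cadd (Cadd (Cadd (Copp z1x) (Cmul (RtoC (g * rho z1 z2 ^ k)) z2))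
             (Copp (Cmul (RtoC m) z2)))
       (Cmul (Cmul Ci (RtoC gamma)) z1).

Definition energy_density (m g : R) (k : nat) (z1 z2 z1x z2x : Cpx) : Cpx :=
  Cmul (RtoC (1 / 2))
    (Cadd (Csub (Cmul (Cconj z1) z2x) (Cmul (Cconj z2) z1x))
          (RtoC (m * rho z1 z2 - g / INR (k + 1) * rho z1 z2 ^ (k + 1)))).

(* Let e be the real part of the energy density and
   j = 1/2 Re(conj psi1 d_t psi2 - conj psi2 d_t psi1) - gamma/2 (|psi1|^2 - |psi2|^2).
   Substituting the Soler equations into d_t e turns it into d_x j (the gain-loss
   term only contributes the gamma part of j), so the mean value theorem bounds the
   change of int_{-b}^b e over [0, t] by |t| |j(b) - j(-b)| = O(|t| / b), and the
   improper integral of e is the same at every time.  The imaginary part of the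
   density is d_x of Im(conj psi1 psi2) / 2, hence integrates to 0 by decay. *)

From Stdlib Require Import Reals Lra FunctionalExtensionality.
From Coquelicot Require Import Coquelicot.
Open Scope R_scope.

(** * Domination by C / (1 + x^2) *)

Definition dominated (C x a : R) : Prop := Rabs a <= C / (1 + x ^ 2).

Lemma one_plus_sq_pos x : 0 < 1 + x ^ 2.
Proof. pose proof (pow2_ge_0 x); lra. Qed.

Lemma dominated_nonneg C x a : dominated C x a -> 0 <= C.
Proof.
  unfold dominated, Rdiv; intros H.
  pose proof (Rinv_0_lt_compat _ (one_plus_sq_pos x)); pose proof (Rabs_pos a); nra.
Qed.

Lemma dominated_plus C1 C2 x a b :
  dominated C1 x a -> dominated C2 x b -> dominated (C1 + C2) x (a + b).
Proof. unfold dominated, Rdiv; intros; eapply Rle_trans; [apply Rabs_triang | lra]. Qed.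

Lemma dominated_minus C1 C2 x a b :
  dominated C1 x a -> dominated C2 x b -> dominated (C1 + C2) x (a - b).
Proof.
  unfold dominated, Rdiv; intros; eapply Rle_trans; [apply Rabs_triang|].
  rewrite Rabs_Ropp; lra.
Qed.

Lemma dominated_scal c C x a : dominated C x a -> dominated (Rabs c * C) x (c * a).
Proof.
  unfold dominated, Rdiv; intros H; rewrite Rabs_mult, Rmult_assoc.
  apply Rmult_le_compat_l; [apply Rabs_pos | exact H].
Qed.

(* Uses [1 / (1 + x^2) <= 1]: a product of dominated terms decays even faster. *)
Lemma dominated_mult C1 C2 x a b :
  dominated C1 x a -> dominated C2 x b -> dominated (C1 * C2) x (a * b).
Proof.
  intros Ha Hb.
  pose proof (dominated_nonneg _ _ _ Ha); pose proof (dominated_nonneg _ _ _ Hb).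
  unfold dominated, Rdiv in *; rewrite Rabs_mult.
  set (w := / (1 + x ^ 2)) in *.
  assert (Hw0 : 0 < w) by apply Rinv_0_lt_compat, one_plus_sq_pos.
  assert (Hw1 : w <= 1).
  { rewrite <- Rinv_1; apply Rinv_le_contravar; [lra|].
    pose proof (pow2_ge_0 x); lra. }
  apply Rle_trans with ((C1 * w) * (C2 * w)).
  - apply Rmult_le_compat; auto using Rabs_pos.
  - replace (C1 * w * (C2 * w)) with (C1 * C2 * w * w) by ring.
    rewrite <- (Rmult_1_r (C1 * C2 * w)) at 2.
    apply Rmult_le_compat_l; [apply Rmult_le_pos; [apply Rmult_le_pos|]|]; lra.
Qed.

Lemma dominated_pow_S C x a n : dominated C x a -> dominated (C ^ S n) x (a ^ S n).
Proof.
  intros H; induction n as [|n IH].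
  - simpl; rewrite !Rmult_1_r; exact H.
  - change (dominated (C * C ^ S n) x (a * a ^ S n)); apply dominated_mult; assumption.
Qed.

Lemma dominated_le_div C M x a : dominated C x a -> 0 < M -> M <= Rabs x -> Rabs a <= C / M.
Proof.
  intros H HM Hx; pose proof (dominated_nonneg _ _ _ H) as HC.
  eapply Rle_trans; [exact H|].
  unfold Rdiv; apply Rmult_le_compat_l; [exact HC|].
  apply Rinv_le_contravar; [exact HM|].
  rewrite <- (pow2_abs x); nra.
Qed.

Definition Rdecays (f : R -> R -> R) : Prop :=
  forall T, exists C, forall t x, Rabs t <= T -> dominated C x (f t x).

Lemma Rdecays_plus f g : Rdecays f -> Rdecays g -> Rdecays (fun t x => f t x + g t x).
Proof.
  intros Hf Hg T; destruct (Hf T) as [Cf HCf], (Hg T) as [Cg HCg].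
  exists (Cf + Cg); intros t x Ht; apply dominated_plus; auto.
Qed.

Lemma Rdecays_minus f g : Rdecays f -> Rdecays g -> Rdecays (fun t x => f t x - g t x).
Proof.
  intros Hf Hg T; destruct (Hf T) as [Cf HCf], (Hg T) as [Cg HCg].
  exists (Cf + Cg); intros t x Ht; apply dominated_minus; auto.
Qed.

Lemma Rdecays_scal c f : Rdecays f -> Rdecays (fun t x => c * f t x).
Proof.
  intros Hf T; destruct (Hf T) as [Cf HCf].
  exists (Rabs c * Cf); intros t x Ht; apply dominated_scal; auto.
Qed.

Lemma Rdecays_pow_S f n : Rdecays f -> Rdecays (fun t x => f t x ^ S n).
Proof.
  intros Hf T; destruct (Hf T) as [Cf HCf].
  exists (Cf ^ S n); intros t x Ht; apply dominated_pow_S; auto.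
Qed.

(* [Cdot z w] and [Ccross z w] are the real and imaginary parts of [conj z * w]. *)
Definition Cdot (z w : Cpx) : R := fst z * fst w + snd z * snd w.
Definition Ccross (z w : Cpx) : R := fst z * snd w - snd z * fst w.

Lemma Rdecays_Cdot p q : decays p -> decays q -> Rdecays (fun t x => Cdot (p t x) (q t x)).
Proof.
  intros Hp Hq T; destruct (Hp T) as [Cp HCp], (Hq T) as [Cq HCq].
  exists (Cp * Cq + Cp * Cq); intros t x Ht.
  destruct (HCp t x Ht), (HCq t x Ht).
  unfold Cdot; apply dominated_plus; apply dominated_mult; assumption.
Qed.

Lemma Rdecays_Ccross p q : decays p -> decays q -> Rdecays (fun t x => Ccross (p t x) (q t x)).
Proof.
  intros Hp Hq T; destruct (Hp T) as [Cp HCp], (Hq T) as [Cq HCq].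
  exists (Cp * Cq + Cp * Cq); intros t x Ht.
  destruct (HCp t x Ht), (HCq t x Ht).
  unfold Ccross; apply dominated_minus; apply dominated_mult; assumption.
Qed.

Lemma Rdecays_rho p q : decays p -> decays q -> Rdecays (fun t x => rho (p t x) (q t x)).
Proof.
  intros Hp Hq T; destruct (Hp T) as [Cp HCp], (Hq T) as [Cq HCq].
  exists (Cp ^ 2 + Cp ^ 2 + (Cq ^ 2 + Cq ^ 2)); intros t x Ht.
  destruct (HCp t x Ht), (HCq t x Ht).
  unfold rho, Cnorm2; apply dominated_minus; apply dominated_plus;
    apply dominated_pow_S; assumption.
Qed.

Ltac Rdecays_auto :=
  repeat first
    [ apply Rdecays_Cdot; assumption | apply Rdecays_Ccross; assumption
    | apply Rdecays_rho; assumption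
    | apply Rdecays_minus | apply Rdecays_plus | apply Rdecays_pow_S
    | apply Rdecays_scal ].

(** * Improper integrals of dominated functions *)

Lemma ex_RInt_of_continuous (f : R -> R) a b : (forall x, continuous f x) -> ex_RInt f a b.
Proof. intros H; apply (ex_RInt_continuous (V := R_CompleteNormedModule)); auto. Qed.

Lemma R_improper_integral_intro (f : R -> R) l :
  (forall x, continuous f x) ->
  (forall eps, 0 < eps -> exists M, 0 < M /\
     forall a b, a <= - M -> M <= b -> Rabs (RInt f a b - l) < eps) ->
  R_improper_integral f l.
Proof.
  intros Hc H eps Heps; destruct (H eps Heps) as [M [HM HMab]].
  exists M; split; [exact HM|]; intros a b Ha Hb.
  exists (ex_RInt_Reals_0 _ _ _ (ex_RInt_of_continuous f a b Hc)).
  rewrite <- RInt_Reals; auto.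
Qed.

Lemma R_improper_integral_RInt (f : R -> R) l :
  R_improper_integral f l ->
  forall eps, 0 < eps -> exists M, 0 < M /\
    forall a b, a <= - M -> M <= b -> Rabs (RInt f a b - l) < eps.
Proof.
  intros H eps Heps; destruct (H eps Heps) as [M [HM HMab]].
  exists M; split; [exact HM|]; intros a b Ha Hb.
  destruct (HMab a b Ha Hb) as [pr Hpr]; rewrite (RInt_Reals f a b pr); exact Hpr.
Qed.

Lemma R_improper_integral_ext (f g : R -> R) l :
  (forall x, f x = g x) -> R_improper_integral f l -> R_improper_integral g l.
Proof. intros H; replace g with f by (apply functional_extensionality; exact H); auto. Qed.

Lemma Rdiv_lt_of_div_lt A eps M : 0 < eps -> 0 <= A -> A / eps < M -> A / M < eps.
Proof.
  intros He HA H.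
  assert (0 <= A / eps) by (apply Rdiv_le_0_compat; assumption).
  apply Rlt_div_l; [lra|]; apply Rlt_div_l in H; lra.
Qed.

Lemma is_RInt_inv_sq C p q : p <= q -> (0 < p \/ q < 0) ->
  is_RInt (fun x => C / x ^ 2) p q (C / p - C / q).
Proof.
  intros Hpq Hs.
  assert (Hnz : forall x, Rmin p q <= x <= Rmax p q -> x <> 0).
  { rewrite Rmin_left, Rmax_right by lra; intros x Hx; lra. }
  replace (C / p - C / q) with (minus ((fun x => - C / x) q) ((fun x => - C / x) p)).
  2: { unfold minus, plus, opp; simpl; field; split; intro; subst; lra. }
  apply (is_RInt_derive (fun x => - C / x)); intros x Hx; specialize (Hnz x Hx).
  - auto_derive; [exact Hnz | field; exact Hnz].
  - apply (ex_derive_continuous (K := R_AbsRing) (V := R_NormedModule)).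
    auto_derive; rewrite Rmult_1_r; apply Rmult_integral_contrapositive_currified; exact Hnz.
Qed.

Section DominatedIntegral.

Variables (f : R -> R) (C : R).
Hypothesis f_cont : forall x, continuous f x.
Hypothesis f_dom : forall x, dominated C x (f x).

(* Compare with [C / x^2], whose integral over the tail is explicit. *)
Lemma RInt_tail_le M p q : 0 < M -> p <= q -> (M <= p \/ q <= - M) ->
  Rabs (RInt f p q) <= C / M.
Proof.
  intros HM Hpq Hside.
  pose proof (dominated_nonneg _ _ _ (f_dom 0)) as HC.
  assert (Hs : 0 < p \/ q < 0) by lra.
  assert (Hsq : forall x, p <= x <= q -> C / (1 + x ^ 2) <= C / x ^ 2).
  { intros x Hx; unfold Rdiv; apply Rmult_le_compat_l; [exact HC|].
    apply Rinv_le_contravar; [|lra].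
    apply pow2_gt_0; lra. }
  assert (I1 := is_RInt_inv_sq C p q Hpq Hs).
  assert (I2 := is_RInt_inv_sq (- C) p q Hpq Hs).
  assert (Hup : RInt f p q <= C / p - C / q).
  { rewrite <- (is_RInt_unique _ _ _ _ I1).
    apply RInt_le; [lra | apply ex_RInt_of_continuous; exact f_cont | eexists; exact I1|].
    intros x Hx; specialize (f_dom x); specialize (Hsq x ltac:(lra)).
    apply Rabs_le_between in f_dom; lra. }
  assert (Hlow : - C / p - - C / q <= RInt f p q).
  { rewrite <- (is_RInt_unique _ _ _ _ I2).
    apply RInt_le; [lra | eexists; exact I2 | apply ex_RInt_of_continuous; exact f_cont|].
    intros x Hx; specialize (f_dom x); specialize (Hsq x ltac:(lra)).
    apply Rabs_le_between in f_dom.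
    replace (- C / x ^ 2) with (- (C / x ^ 2)) by (unfold Rdiv; ring); lra. }
  replace (- C / p - - C / q) with (- (C / p - C / q)) in Hlow by (field; lra).
  assert (Htail : C / p - C / q <= C / M).
  { destruct Hside as [Hp | Hq].
    - assert (0 <= C / q) by (apply Rdiv_le_0_compat; lra).
      assert (C / p <= C / M)
        by (unfold Rdiv; apply Rmult_le_compat_l; [exact HC | apply Rinv_le_contravar; lra]).
      lra.
    - replace (C / p - C / q) with (C / - q - C / - p) by (field; lra).
      assert (0 <= C / - p) by (apply Rdiv_le_0_compat; lra).
      assert (C / - q <= C / M)
        by (unfold Rdiv; apply Rmult_le_compat_l; [exact HC | apply Rinv_le_contravar; lra]).
      lra. }
  apply Rabs_le; lra.
Qed.

Lemma RInt_window_diff_le M a b a' b' :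
  0 < M -> a <= - M -> M <= b -> a' <= - M -> M <= b' ->
  Rabs (RInt f a b - RInt f a' b') <= 4 * C / M.
Proof.
  intros HM Ha Hb Ha' Hb'.
  assert (Chasles : forall u v w, RInt f u w = RInt f u v + RInt f v w).
  { intros u v w; symmetry.
    apply (RInt_Chasles (V := R_CompleteNormedModule)); apply ex_RInt_of_continuous, f_cont. }
  rewrite (Chasles a (- M) b), (Chasles (- M) M b), (Chasles a' (- M) b'), (Chasles (- M) M b').
  pose proof (RInt_tail_le M a (- M) HM Ha ltac:(lra)) as T1.
  pose proof (RInt_tail_le M M b HM Hb ltac:(lra)) as T2.
  pose proof (RInt_tail_le M a' (- M) HM Ha' ltac:(lra)) as T3.
  pose proof (RInt_tail_le M M b' HM Hb' ltac:(lra)) as T4.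
  apply Rabs_le_between in T1, T2, T3, T4.
  replace (4 * C / M) with (4 * (C / M)) by (field; lra).
  apply Rabs_le; lra.
Qed.

(* The integrals over [-n, n] form a Cauchy sequence; its limit is the integral. *)
Lemma R_improper_integral_exists : exists l, R_improper_integral f l.
Proof.
  pose proof (dominated_nonneg _ _ _ (f_dom 0)) as HC.
  set (s n := RInt f (- INR n) (INR n)).
  assert (Hcauchy : ex_lim_seq_cauchy s).
  { intros eps; pose proof (cond_pos eps) as Heps.
    destruct (INR_archimed 1 (4 * C / eps) Rlt_0_1) as [N HN]; rewrite Rmult_1_r in HN.
    assert (0 <= 4 * C / eps) by (apply Rdiv_le_0_compat; lra).
    exists N; intros n p Hn Hp; apply le_INR in Hn; apply le_INR in Hp.
    eapply Rle_lt_trans; [apply (RInt_window_diff_le (INR N)); lra|].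
    apply Rdiv_lt_of_div_lt; lra. }
  apply ex_lim_seq_cauchy_corr in Hcauchy; destruct Hcauchy as [l Hl].
  exists l; apply R_improper_integral_intro; [exact f_cont|]; intros eps Heps.
  apply is_lim_seq_spec in Hl.
  destruct (Hl (mkposreal (eps / 2) ltac:(lra))) as [N1 HN1]; simpl in HN1.
  assert (0 <= 4 * C / (eps / 2)) by (apply Rdiv_le_0_compat; lra).
  set (M := 4 * C / (eps / 2) + 1).
  exists M; split; [unfold M; lra|]; intros a b Ha Hb.
  destruct (INR_archimed 1 M Rlt_0_1) as [N2 HN2]; rewrite Rmult_1_r in HN2.
  set (n := Nat.max N1 N2).
  assert (Hn : M < INR n) by (eapply Rlt_le_trans; [exact HN2 | apply le_INR, Nat.le_max_r]).
  specialize (HN1 n (Nat.le_max_l _ _)).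
  assert (Hw := RInt_window_diff_le M a b (- INR n) (INR n)
                  ltac:(unfold M; lra) Ha Hb ltac:(lra) ltac:(lra)).
  assert (4 * C / M < eps / 2) by (apply Rdiv_lt_of_div_lt; unfold M; lra).
  fold (s n) in Hw; apply Rabs_le_between in Hw; apply Rabs_lt_between in HN1.
  apply Rabs_lt_between; lra.
Qed.

End DominatedIntegral.

Lemma R_improper_integral_derive (f h : R -> R) C :
  (forall x, continuous f x) -> (forall x, is_derive h x (f x)) ->
  (forall x, dominated C x (h x)) -> R_improper_integral f 0.
Proof.
  intros Hc Hd Hdom; pose proof (dominated_nonneg _ _ _ (Hdom 0)) as HC.
  apply R_improper_integral_intro; [exact Hc|]; intros eps Heps.
  assert (0 <= C / (eps / 2)) by (apply Rdiv_le_0_compat; lra).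
  set (M := C / (eps / 2) + 1).
  assert (HM : 0 < M) by (unfold M; lra).
  exists M; split; [exact HM|]; intros a b Ha Hb.
  assert (HFTC : RInt f a b = h b - h a).
  { apply is_RInt_unique, (is_RInt_derive (V := R_CompleteNormedModule) h f); auto. }
  rewrite HFTC, Rminus_0_r.
  assert (Hhb := dominated_le_div _ M _ _ (Hdom b) HM ltac:(rewrite Rabs_right; lra)).
  assert (Hha := dominated_le_div _ M _ _ (Hdom a) HM ltac:(rewrite Rabs_left1; lra)).
  assert (C / M < eps / 2) by (apply Rdiv_lt_of_div_lt; unfold M; lra).
  apply Rle_lt_trans with (Rabs (h b) + Rabs (- h a)); [apply Rabs_triang|].
  rewrite Rabs_Ropp; lra.
Qed.

Lemma R_improper_integral_unique_windows (f g : R -> R) l1 l2 :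
  R_improper_integral f l1 -> R_improper_integral g l2 ->
  (forall eps, 0 < eps -> exists N, forall b, N <= b ->
     Rabs (RInt f (- b) b - RInt g (- b) b) < eps) ->
  l1 = l2.
Proof.
  intros H1 H2 H12; apply cond_eq; intros eps Heps.
  destruct (R_improper_integral_RInt f l1 H1 (eps / 3) ltac:(lra)) as [M1 [_ P1]].
  destruct (R_improper_integral_RInt g l2 H2 (eps / 3) ltac:(lra)) as [M2 [_ P2]].
  destruct (H12 (eps / 3) ltac:(lra)) as [N P12].
  set (b := Rmax N (Rmax M1 M2)).
  assert (HN : N <= b) by apply Rmax_l.
  assert (HM1 : M1 <= b) by (eapply Rle_trans; [apply Rmax_l | apply Rmax_r]).
  assert (HM2 : M2 <= b) by (eapply Rle_trans; [apply Rmax_r | apply Rmax_r]).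
  specialize (P1 (- b) b ltac:(lra) HM1); specialize (P2 (- b) b ltac:(lra) HM2).
  specialize (P12 b HN).
  apply Rabs_lt_between in P1, P2, P12; apply Rabs_lt_between; lra.
Qed.

(** * Conservation laws *)

Lemma continuity_2d_pt_continuous_snd f t x :
  continuity_2d_pt f t x -> continuous (fun y => f t y) x.
Proof.
  intros H; apply continuity_pt_filterlim; intros eps Heps.
  destruct (H (mkposreal eps Heps)) as [d Hd].
  exists d; split; [apply cond_pos|]; intros y [_ Hy]; unfold R_dist in *.
  apply Hd; [|exact Hy]; unfold Rminus; rewrite Rplus_opp_r, Rabs_R0; apply cond_pos.
Qed.

Section ConservationLaw.

Variables (f df j : R -> R -> R).
Hypothesis f_derive_t : forall t x, is_derive (fun s => f s x) t (df t x).
Hypothesis df_cont : forall t x, continuity_2d_pt df t x.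
Hypothesis f_cont_x : forall t x, continuous (fun y => f t y) x.
Hypothesis j_derive_x : forall t x, is_derive (fun y => j t y) x (df t x).

(* Differentiate under the integral sign, then integrate d_x j by the FTC. *)
Lemma is_derive_RInt_window a b t :
  is_derive (fun s => RInt (fun y => f s y) a b) t (j t b - j t a).
Proof.
  assert (Hflux : RInt (fun y => Derive (fun u => f u y) t) a b = j t b - j t a).
  { rewrite (RInt_ext _ (fun y => df t y))
      by (intros y _; apply is_derive_unique, f_derive_t).
    apply is_RInt_unique, (is_RInt_derive (V := R_CompleteNormedModule) (fun y => j t y));
      intros y _; [apply j_derive_x | apply continuity_2d_pt_continuous_snd, df_cont]. }
  rewrite <- Hflux; apply is_derive_RInt_param.
  - apply filter_forall; intros s y _; eexists; apply f_derive_t.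
  - intros y _; apply (continuity_2d_pt_ext df); [|apply df_cont].
    intros u v; symmetry; apply is_derive_unique, f_derive_t.
  - apply filter_forall; intros s; apply ex_RInt_of_continuous, f_cont_x.
Qed.

Lemma RInt_window_drift_le C t b :
  (forall s x, Rabs s <= Rabs t -> dominated C x (j s x)) -> 0 < b ->
  Rabs (RInt (fun y => f t y) (- b) b - RInt (fun y => f 0 y) (- b) b)
    <= 2 * C * Rabs t / b.
Proof.
  intros Hj Hb.
  replace (2 * C * Rabs t / b) with (2 * C / b * Rabs (t - 0)) by (rewrite Rminus_0_r; field; lra).
  apply (bounded_variation (fun s => RInt (fun y => f s y) (- b) b)
           (fun s => j s b - j s (- b))).
  intros s Hs; rewrite !Rminus_0_r in Hs; split; [apply is_derive_RInt_window|].
  assert (Hjb := dominated_le_div _ b _ _ (Hj s b Hs) Hb ltac:(rewrite Rabs_right; lra)).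
  assert (Hja := dominated_le_div _ b _ _ (Hj s (- b) Hs) Hb
                   ltac:(rewrite Rabs_Ropp, Rabs_right; lra)).
  eapply Rle_trans; [apply Rabs_triang|]; rewrite Rabs_Ropp.
  replace (2 * C / b) with (C / b + C / b) by (field; lra); lra.
Qed.

Hypothesis f_decays : Rdecays f.
Hypothesis j_decays : Rdecays j.

Lemma R_improper_integral_conserved :
  exists L, forall t, R_improper_integral (fun x => f t x) L.
Proof.
  destruct (f_decays 0) as [C0 HC0].
  destruct (R_improper_integral_exists (fun x => f 0 x) C0 (f_cont_x 0)
              (fun x => HC0 0 x ltac:(rewrite Rabs_R0; lra))) as [L HL].
  exists L; intros t.
  destruct (f_decays (Rabs t)) as [Ct HCt].
  destruct (R_improper_integral_exists (fun x => f t x) Ct (f_cont_x t)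
              (fun x => HCt t x (Rle_refl _))) as [Lt HLt].
  replace L with Lt; [exact HLt|].
  apply (R_improper_integral_unique_windows _ _ _ _ HLt HL); intros eps Heps.
  destruct (j_decays (Rabs t)) as [C HC].
  pose proof (dominated_nonneg _ _ _ (HC t 0 (Rle_refl _))) as HCnn.
  assert (0 <= 2 * C * Rabs t / eps)
    by (apply Rdiv_le_0_compat; [pose proof (Rabs_pos t); nra | exact Heps]).
  exists (2 * C * Rabs t / eps + 1); intros b Hb.
  eapply Rle_lt_trans; [apply (RInt_window_drift_le C); [exact HC | lra]|].
  apply Rdiv_lt_of_div_lt; [exact Heps | pose proof (Rabs_pos t); nra | lra].
Qed.

End ConservationLaw.

(** * Energy of the Soler model *)

Definition energy_re (m g : R) (k : nat) (z1 z2 z1x z2x : Cpx) : R :=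
  1/2 * (Cdot z1 z2x - Cdot z2 z1x)
  + 1/2 * (m * rho z1 z2 - g / INR (k + 1) * rho z1 z2 ^ (k + 1)).

Definition energy_flux (gamma : R) (z1 z2 z1t z2t : Cpx) : R :=
  1/2 * (Cdot z1 z2t - Cdot z2 z1t) - gamma / 2 * rho z1 z2.

Definition energy_rate (m g : R) (k : nat) (z1 z2 z1t z2t z1x z2x z1tx z2tx : Cpx) : R :=
  1/2 * (Cdot z1t z2x + Cdot z1 z2tx - (Cdot z2t z1x + Cdot z2 z1tx))
  + (m - g * rho z1 z2 ^ k) * (Cdot z1 z1t - Cdot z2 z2t).

Lemma energy_density_fst m g k z1 z2 z1x z2x :
  fst (energy_density m g k z1 z2 z1x z2x) = energy_re m g k z1 z2 z1x z2x.
Proof.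
  unfold energy_density, energy_re, Cdot, Cmul, Cadd, Csub, Copp, Cconj, RtoC; simpl; ring.
Qed.

Lemma energy_density_snd m g k z1 z2 z1x z2x :
  snd (energy_density m g k z1 z2 z1x z2x) = 1/2 * (Ccross z1 z2x - Ccross z2 z1x).
Proof.
  unfold energy_density, Ccross, Cmul, Cadd, Csub, Copp, Cconj, RtoC; simpl; ring.
Qed.

(* The left-hand side is d_x of the flux; z1tx, z2tx are the mixed derivatives. *)
Lemma soler_energy_balance m g gamma k z1 z2 z1t z2t z1x z2x z1tx z2tx :
  soler_eq1 m g gamma k z1 z2 z1t z2x -> soler_eq2 m g gamma k z1 z2 z2t z1x ->
  1/2 * (Cdot z1x z2t + Cdot z1 z2tx - (Cdot z2x z1t + Cdot z2 z1tx))
  - gamma / 2 * (2 * (Cdot z1 z1x - Cdot z2 z2x))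
  = energy_rate m g k z1 z2 z1t z2t z1x z2x z1tx z2tx.
Proof.
  unfold soler_eq1, soler_eq2, energy_rate.
  set (G := g * rho z1 z2 ^ k).
  destruct z1 as [a1 b1], z2 as [a2 b2], z1t as [ta1 tb1], z2t as [ta2 tb2],
    z1x as [xa1 xb1], z2x as [xa2 xb2].
  unfold Cdot, Cmul, Cadd, Copp, Ci, RtoC; simpl; intros E1 E2.
  injection E1; injection E2; intros H4 H3 H2 H1.
  (* Solve the Soler equations for the time derivatives and substitute. *)
  assert (tb1 = - (xa2 - G * a1 + m * a1 - gamma * b2)) by lra.
  assert (ta1 = xb2 - G * b1 + m * b1 + gamma * a2) by lra.
  assert (tb2 = - (- xa1 + G * a2 - m * a2 - gamma * b1)) by lra.
  assert (ta2 = - xb1 + G * b2 - m * b2 + gamma * a1) by lra.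
  subst ta1 tb1 ta2 tb2; field.
Qed.

Lemma is_derive_eq (f : R -> R) (x l l' : R) : is_derive f x l -> l = l' -> is_derive f x l'.
Proof. intros H <-; exact H. Qed.

Lemma is_derive_Rext (f g : R -> R) (x l : R) :
  (forall s, f s = g s) -> is_derive f x l -> is_derive g x l.
Proof. apply is_derive_ext. Qed.

Lemma is_derive_Rplus (f g : R -> R) x df dg :
  is_derive f x df -> is_derive g x dg -> is_derive (fun s => f s + g s) x (df + dg).
Proof. intros; apply (is_derive_plus f g); assumption. Qed.

Lemma is_derive_Rminus (f g : R -> R) x df dg :
  is_derive f x df -> is_derive g x dg -> is_derive (fun s => f s - g s) x (df - dg).
Proof. intros; apply (is_derive_minus f g); assumption. Qed.

Lemma C_deriv_components (f : R -> Cpx) x l : C_deriv f x l ->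
  is_derive (fun s => fst (f s)) x (fst l) /\ is_derive (fun s => snd (f s)) x (snd l).
Proof. intros [H1 H2]; split; apply is_derive_Reals; assumption. Qed.

Lemma is_derive_Cdot (f g : R -> Cpx) x df dg : C_deriv f x df -> C_deriv g x dg ->
  is_derive (fun s => Cdot (f s) (g s)) x (Cdot df (g x) + Cdot (f x) dg).
Proof.
  intros Hf Hg.
  destruct (C_deriv_components _ _ _ Hf), (C_deriv_components _ _ _ Hg).
  unfold Cdot; eapply is_derive_eq.
  - apply is_derive_Rplus; apply Derive.is_derive_mult; eassumption.
  - cbv beta; ring.
Qed.

Lemma is_derive_Ccross (f g : R -> Cpx) x df dg : C_deriv f x df -> C_deriv g x dg ->
  is_derive (fun s => Ccross (f s) (g s)) x (Ccross df (g x) + Ccross (f x) dg).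
Proof.
  intros Hf Hg.
  destruct (C_deriv_components _ _ _ Hf), (C_deriv_components _ _ _ Hg).
  unfold Ccross; eapply is_derive_eq.
  - apply is_derive_Rminus; apply Derive.is_derive_mult; eassumption.
  - cbv beta; ring.
Qed.

Lemma is_derive_rho (f g : R -> Cpx) x df dg : C_deriv f x df -> C_deriv g x dg ->
  is_derive (fun s => rho (f s) (g s)) x (2 * (Cdot (f x) df - Cdot (g x) dg)).
Proof.
  intros Hf Hg.
  apply (is_derive_Rext (fun s => Cdot (f s) (f s) - Cdot (g s) (g s)));
    [intros s; unfold rho, Cnorm2, Cdot; ring|].
  eapply is_derive_eq.
  - exact (is_derive_Rminus _ _ x _ _ (is_derive_Cdot f f x df df Hf Hf)
             (is_derive_Cdot g g x dg dg Hg Hg)).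
  - unfold Cdot; ring.
Qed.

Lemma is_derive_energy_re m g k (f1 f2 f1x f2x : R -> Cpx) d1 d2 d1x d2x s :
  C_deriv f1 s d1 -> C_deriv f2 s d2 -> C_deriv f1x s d1x -> C_deriv f2x s d2x ->
  is_derive (fun s => energy_re m g k (f1 s) (f2 s) (f1x s) (f2x s)) s
    (energy_rate m g k (f1 s) (f2 s) d1 d2 (f1x s) (f2x s) d1x d2x).
Proof.
  intros H1 H2 H1x H2x; unfold energy_re; eapply is_derive_eq.
  - apply is_derive_Rplus; apply is_derive_scal.
    + apply is_derive_Rminus; apply is_derive_Cdot; eassumption.
    + apply is_derive_Rminus; apply is_derive_scal; [|apply is_derive_pow];
        apply is_derive_rho; eassumption.
  - unfold energy_rate; rewrite Nat.add_1_r, S_INR; simpl pred.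
    field; pose proof (pos_INR k); lra.
Qed.

Lemma is_derive_energy_flux gamma (f1 f2 f1t f2t : R -> Cpx) d1 d2 d1t d2t y :
  C_deriv f1 y d1 -> C_deriv f2 y d2 -> C_deriv f1t y d1t -> C_deriv f2t y d2t ->
  is_derive (fun y => energy_flux gamma (f1 y) (f2 y) (f1t y) (f2t y)) y
    (1/2 * (Cdot d1 (f2t y) + Cdot (f1 y) d2t - (Cdot d2 (f1t y) + Cdot (f2 y) d1t))
     - gamma / 2 * (2 * (Cdot (f1 y) d1 - Cdot (f2 y) d2))).
Proof.
  intros H1 H2 H1t H2t; unfold energy_flux.
  apply is_derive_Rminus; apply is_derive_scal.
  - apply is_derive_Rminus; apply is_derive_Cdot; eassumption.
  - apply is_derive_rho; eassumption.
Qed.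

Lemma is_derive_Ccross_energy_density_snd m g k (f1 f2 : R -> Cpx) d1 d2 y :
  C_deriv f1 y d1 -> C_deriv f2 y d2 ->
  is_derive (fun y => 1/2 * Ccross (f1 y) (f2 y)) y
    (snd (energy_density m g k (f1 y) (f2 y) d1 d2)).
Proof.
  intros H1 H2; eapply is_derive_eq.
  - apply is_derive_scal, is_derive_Ccross; eassumption.
  - rewrite energy_density_snd; unfold Ccross; ring.
Qed.

Lemma continuity_2d_pt_of_cont2 f : cont2 f -> forall t x, continuity_2d_pt f t x.
Proof.
  intros H t x eps; destruct (H t x eps (cond_pos eps)) as [d [Hd P]].
  exists (mkposreal d Hd); intros u v Hu Hv; apply P; assumption.
Qed.

Lemma continuity_2d_pt_pow f n t x :
  continuity_2d_pt f t x -> continuity_2d_pt (fun u v => f u v ^ n) t x.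
Proof.
  intros H; induction n as [|n IH]; simpl.
  - apply continuity_2d_pt_const.
  - apply continuity_2d_pt_mult; assumption.
Qed.

Lemma continuity_2d_pt_Cdot p q t x : Ccont2 p -> Ccont2 q ->
  continuity_2d_pt (fun s y => Cdot (p s y) (q s y)) t x.
Proof.
  intros [p1 p2] [q1 q2]; unfold Cdot.
  apply continuity_2d_pt_plus; apply continuity_2d_pt_mult;
    apply continuity_2d_pt_of_cont2; assumption.
Qed.

Lemma continuity_2d_pt_Ccross p q t x : Ccont2 p -> Ccont2 q ->
  continuity_2d_pt (fun s y => Ccross (p s y) (q s y)) t x.
Proof.
  intros [p1 p2] [q1 q2]; unfold Ccross.
  apply continuity_2d_pt_minus; apply continuity_2d_pt_mult;
    apply continuity_2d_pt_of_cont2; assumption.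
Qed.

Lemma continuity_2d_pt_rho p q t x : Ccont2 p -> Ccont2 q ->
  continuity_2d_pt (fun s y => rho (p s y) (q s y)) t x.
Proof.
  intros [p1 p2] [q1 q2]; unfold rho, Cnorm2.
  apply continuity_2d_pt_minus; apply continuity_2d_pt_plus; apply continuity_2d_pt_pow;
    apply continuity_2d_pt_of_cont2; assumption.
Qed.

Ltac continuity_2d_auto :=
  repeat first
    [ apply continuity_2d_pt_Cdot; assumption | apply continuity_2d_pt_Ccross; assumption
    | apply continuity_2d_pt_rho; assumption
    | apply continuity_2d_pt_minus | apply continuity_2d_pt_plus
    | apply continuity_2d_pt_mult | apply continuity_2d_pt_pow
    | apply continuity_2d_pt_const ].

Section SolerSolution.

Variables (m g gamma : R) (k : nat).
Variables (psi1 psi2 psi1_t psi2_t psi1_x psi2_x psi1_tx psi2_tx : R -> R -> Cpx).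
Hypothesis smooth1 : smooth_decaying psi1 psi1_t psi1_x psi1_tx.
Hypothesis smooth2 : smooth_decaying psi2 psi2_t psi2_x psi2_tx.
Hypothesis soler1 :
  forall t x, soler_eq1 m g gamma k (psi1 t x) (psi2 t x) (psi1_t t x) (psi2_x t x).
Hypothesis soler2 :
  forall t x, soler_eq2 m g gamma k (psi1 t x) (psi2 t x) (psi2_t t x) (psi1_x t x).

Local Notation density t x :=
  (energy_re m g k (psi1 t x) (psi2 t x) (psi1_x t x) (psi2_x t x)).
Local Notation flux t x :=
  (energy_flux gamma (psi1 t x) (psi2 t x) (psi1_t t x) (psi2_t t x)).
Local Notation rate t x :=
  (energy_rate m g k (psi1 t x) (psi2 t x) (psi1_t t x) (psi2_t t x)
     (psi1_x t x) (psi2_x t x) (psi1_tx t x) (psi2_tx t x)).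

Lemma soler_density_derive_t t x : is_derive (fun s => density s x) t (rate t x).
Proof.
  destruct smooth1 as (dt1 & _ & dtx1 & _), smooth2 as (dt2 & _ & dtx2 & _).
  apply (is_derive_energy_re m g k (fun s => psi1 s x) (fun s => psi2 s x)
           (fun s => psi1_x s x) (fun s => psi2_x s x)); auto.
Qed.

Lemma soler_flux_derive_x t x : is_derive (fun y => flux t y) x (rate t x).
Proof.
  destruct smooth1 as (_ & dx1 & _ & dxt1 & _), smooth2 as (_ & dx2 & _ & dxt2 & _).
  eapply is_derive_eq.
  { apply (is_derive_energy_flux gamma (fun y => psi1 t y) (fun y => psi2 t y)
             (fun y => psi1_t t y) (fun y => psi2_t t y)); auto. }
  apply soler_energy_balance; auto.
Qed.

Lemma soler_rate_continuous t x : continuity_2d_pt (fun s y => rate s y) t x.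
Proof.
  destruct smooth1 as (_&_&_&_& c1 & c1t & c1x & c1tx & _),
    smooth2 as (_&_&_&_& c2 & c2t & c2x & c2tx & _).
  unfold energy_rate; continuity_2d_auto.
Qed.

Lemma soler_density_continuous_x t x : continuous (fun y => density t y) x.
Proof.
  destruct smooth1 as (_&_&_&_& c1 & _ & c1x & _), smooth2 as (_&_&_&_& c2 & _ & c2x & _).
  apply (continuity_2d_pt_continuous_snd (fun s y => density s y)).
  unfold energy_re; continuity_2d_auto.
Qed.

Lemma soler_density_decays : Rdecays (fun t x => density t x).
Proof.
  destruct smooth1 as (_&_&_&_&_&_&_&_& b1 & _ & b1x & _),
    smooth2 as (_&_&_&_&_&_&_&_& b2 & _ & b2x & _).
  unfold energy_re; rewrite Nat.add_1_r; Rdecays_auto.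
Qed.

Lemma soler_flux_decays : Rdecays (fun t x => flux t x).
Proof.
  destruct smooth1 as (_&_&_&_&_&_&_&_& b1 & b1t & _), smooth2 as (_&_&_&_&_&_&_&_& b2 & b2t & _).
  unfold energy_flux; Rdecays_auto.
Qed.

Lemma soler_energy_conserved : exists L, forall t,
  R_improper_integral
    (fun x => fst (energy_density m g k (psi1 t x) (psi2 t x) (psi1_x t x) (psi2_x t x))) L.
Proof.
  destruct (R_improper_integral_conserved (fun t x => density t x) (fun t x => rate t x)
              (fun t x => flux t x) soler_density_derive_t soler_rate_continuous
              soler_density_continuous_x soler_flux_derive_x soler_density_decays
              soler_flux_decays) as [L HL].
  exists L; intros t; apply (R_improper_integral_ext (fun x => density t x)); [|apply HL].
  intros x; symmetry; apply energy_density_fst.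
Qed.

Lemma soler_energy_imaginary_part t :
  R_improper_integral
    (fun x => snd (energy_density m g k (psi1 t x) (psi2 t x) (psi1_x t x) (psi2_x t x))) 0.
Proof.
  destruct smooth1 as (_ & dx1 & _&_& c1 & _ & c1x & _ & b1 & _),
    smooth2 as (_ & dx2 & _&_& c2 & _ & c2x & _ & b2 & _).
  assert (Hh : Rdecays (fun t x => 1/2 * Ccross (psi1 t x) (psi2 t x))) by Rdecays_auto.
  destruct (Hh (Rabs t)) as [C HC].
  apply (R_improper_integral_derive _ (fun y => 1/2 * Ccross (psi1 t y) (psi2 t y)) C).
  - intros x.
    apply (continuity_2d_pt_continuous_snd (fun s y =>
             snd (energy_density m g k (psi1 s y) (psi2 s y) (psi1_x s y) (psi2_x s y)))).
    apply (continuity_2d_pt_ext (fun s y => 1/2 * (Ccross (psi1 s y) (psi2_x s y)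
                                                    - Ccross (psi2 s y) (psi1_x s y)))).
    { intros u v; symmetry; apply energy_density_snd. }
    continuity_2d_auto.
  - intros x; apply is_derive_Ccross_energy_density_snd; auto.
  - intros x; apply HC, Rle_refl.
Qed.

End SolerSolution.

Theorem mainTheorem8 (m g : R) (k : nat) (gamma : R)
  (psi1 psi2 psi1_t psi2_t psi1_x psi2_x psi1_tx psi2_tx : R -> R -> Cpx) :
  0 < m -> 0 < g ->
  smooth_decaying psi1 psi1_t psi1_x psi1_tx ->
  smooth_decaying psi2 psi2_t psi2_x psi2_tx ->
  (forall t x, soler_eq1 m g gamma k (psi1 t x) (psi2 t x) (psi1_t t x) (psi2_x t x)) ->
  (forall t x, soler_eq2 m g gamma k (psi1 t x) (psi2 t x) (psi2_t t x) (psi1_x t x)) ->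
  exists E : R -> R,
    (forall t, C_improper_integral
       (fun x => energy_density m g k (psi1 t x) (psi2 t x) (psi1_x t x) (psi2_x t x))
       (RtoC (E t))) /\
    (forall t, derivable_pt_lim E t 0).
Proof.
  intros _ _ smooth1 smooth2 soler1 soler2.
  destruct (soler_energy_conserved m g gamma k psi1 psi2 psi1_t psi2_t psi1_x psi2_x
              psi1_tx psi2_tx smooth1 smooth2 soler1 soler2) as [L HL].
  exists (fun _ => L); split.
  - intros t; split; [apply HL|].
    apply (soler_energy_imaginary_part m g k psi1 psi2 psi1_t psi2_t psi1_x psi2_x
             psi1_tx psi2_tx smooth1 smooth2).
  - intros t; apply derivable_pt_lim_const.
Qed.
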